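(* Let $(X,Y,G)$ be random with $X\in\mathcal{X}$, $Y\in\{0,1\}$, $G\in\{a,b\}$, $\Pr[G=g]>0$ and $0<p_g<1$ for $g\in\{a,b\}$, where $p_g:=\Pr[Y=1\mid G=g]$, and assume $p_a\neq p_b$. Let $\Phi:\mathcal{X}\to\mathcal{Z}$ be a measurable encoder and $k_{\mathcal{Z}}$ a positive-definite kernel on $\mathcal{Z}$ with RKHS $\mathcal{H}_{\mathcal{Z}}$ and measurable feature map $\phi_{\mathcal{Z}}$, such that the Bochner expectations $\mu_{\Phi,g}:=\mathbb{E}[\phi_{\mathcal{Z}}(\Phi(X))\mid G=g]$ and $\mu_{\Phi,y,g}:=\mathbb{E}[\phi_{\mathcal{Z}}(\Phi(X))\mid Y=y,G=g]$ exist. Suppose that for some $\varepsilon,\rho\ge0$, \[\|\mu_{\Phi,a}-\mu_{\Phi,b}\|_{\mathcal{H}_{\mathcal{Z}}}\le\varepsilon\quad\text{and}\quad\|\mu_{\Phi,y,a}-\mu_{\Phi,y,b}\|_{\mathcal{H}_{\mathcal{Z}}}\le\rho\ \text{ for } y\in\{0,1\}.\] Then \[\|\mu_{\Phi,1,a}-\mu_{\Phi,0,a}\|_{\mathcal{H}_{\mathcal{Z}}}\le\frac{\varepsilon+\rho}{|p_a-p_b|}\quad\text{and}\quad\|\mu_{\Phi,1,b}-\mu_{\Phi,0,b}\|_{\mathcal{H}_{\mathcal{Z}}}\le\frac{\varepsilon+\rho}{|p_a-p_b|}.\]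
   Context: $\varepsilon$ measures approximate distributional parity of the representation $\Phi(X)$ across groups and $\rho$ measures approximate class-conditional separation in representation space. *)

From HB Require Import structures.
From mathcomp Require Import all_boot all_order all_algebra.
From mathcomp Require Import all_classical all_reals all_analysis.
Set Implicit Arguments. Unset Strict Implicit. Unset Printing Implicit Defensive.
Import Order.TTheory GRing.Theory Num.Theory.
Import numFieldNormedType.Exports.
Local Open Scope classical_set_scope.
Local Open Scope ring_scope.

(* A real inner product on a normed space whose norm is induced by it.
   Together with completeness of the carrier, this makes H a real
   Hilbert space (the RKHS H_Z). *)
Record inner_product (R : realType) (H : normedModType R) := InnerProduct {
  ip : H -> H -> R ;
  ip_sym : forall u v, ip u v = ip v u ;
  ip_linear : forall (a : R) (u v w : H), ip (a *: u + v) w = a * ip u w + ip v w ;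
  ip_norm : forall u, ip u u = `|u| ^+ 2 }.

Definition feature_kernel (R : realType) (H : normedModType R)
  (ipH : inner_product H) (Z : Type) (phi : Z -> H) : Z -> Z -> R :=
  fun z z' => ip ipH (phi z) (phi z').

Definition cond_prob (R : realType) (d : measure_display) (T : measurableType d)
  (P : probability T R) (A B : set T) : R :=
  fine (P (A `&` B)) / fine (P B).

Definition pY1 (R : realType) (d : measure_display) (T : measurableType d)
  (P : probability T R) (Y G : T -> bool) (g : bool) : R :=
  cond_prob P [set w | Y w = true] [set w | G w = g].

(* m is the (Bochner) conditional expectation E[F | E] of the H-valued
   random element F given the event E (with P E > 0):  F is (weakly)
   measurable on E with integrable norm, and m is characterised by
   <h, m> = E[<h, F> | E] for every h in H (which determines the Bochner
   integral uniquely in a Hilbert space). *)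
Definition bochner_cond_mean (R : realType) (d : measure_display)
  (T : measurableType d) (P : probability T R) (H : normedModType R)
  (ipH : inner_product H) (E : set T) (F : T -> H) (m : H) : Prop :=
  [/\ measurable E, (0 < P E)%E,
      measurable_fun E (fun w => `|F w|),
      P.-integrable E (fun w => (`|F w|)%:E) &
      forall h : H,
        measurable_fun E (fun w => ip ipH h (F w)) /\
        ip ipH h m = fine (\int[P]_(w in E) (ip ipH h (F w))%:E) / fine (P E)].

From HB Require Import structures.
From mathcomp Require Import all_boot all_order all_algebra.
From mathcomp Require Import all_classical all_reals all_analysis.
From mathcomp Require Import ring lra measurable_realfun.
Set Implicit Arguments. Unset Strict Implicit. Unset Printing Implicit Defensive.
Import Order.TTheory GRing.Theory Num.Theory.
Import numFieldNormedType.Exports.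
Local Open Scope classical_set_scope.
Local Open Scope ring_scope.

(* Splitting the event [G = g] according to the label shows that the group
   mean is the mixture mu_g = p_g mu_(1,g) + (1 - p_g) mu_(0,g).  Subtracting
   the mixtures of the two groups gives
     mu_a - mu_b = (p_a - p_b) (mu_(1,a) - mu_(0,a))
                   + p_b (mu_(1,a) - mu_(1,b)) + (1 - p_b) (mu_(0,a) - mu_(0,b)),
   so the triangle inequality bounds |p_a - p_b| |mu_(1,a) - mu_(0,a)| by
   eps + p_b rho + (1 - p_b) rho = eps + rho; group b is symmetric. *)

Section InnerProduct.
Variables (R : realType) (H : normedModType R) (ipH : inner_product H).
Local Notation ip := (ip ipH).

Lemma ip0l w : ip 0 w = 0.
Proof.
have := ip_linear ipH 1 0 0 w; rewrite scale1r addr0 mul1r.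
by move=> /(congr1 (fun t => t - ip 0 w)); rewrite subrr addrK.
Qed.

Lemma ipZl a u w : ip (a *: u) w = a * ip u w.
Proof. by have := ip_linear ipH a u 0 w; rewrite addr0 ip0l addr0. Qed.

Lemma ipDl u v w : ip (u + v) w = ip u w + ip v w.
Proof. by have := ip_linear ipH 1 u v w; rewrite scale1r mul1r. Qed.

Lemma ipZr a u w : ip w (a *: u) = a * ip w u.
Proof. by rewrite ip_sym ipZl ip_sym. Qed.

Lemma ipDr u v w : ip w (u + v) = ip w u + ip w v.
Proof. by rewrite ip_sym ipDl !(ip_sym _ w). Qed.

Lemma ipBr u v w : ip w (u - v) = ip w u - ip w v.
Proof. by rewrite ipDr -scaleN1r ipZr mulN1r. Qed.

Lemma eq_ip x y : (forall h, ip h x = ip h y) -> x = y.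
Proof.
move=> eq_xy; apply/eqP; rewrite -subr_eq0 -normr_eq0 -sqrf_eq0 -(ip_norm ipH).
by rewrite ipBr eq_xy subrr.
Qed.

Lemma normr_ip_le u v : `|ip u v| <= `|u| * `|v|.
Proof.
have [uv0|uv_gt0] := eqVneq (`|u| * `|v|) 0.
  move/eqP: uv0; rewrite mulf_eq0 !normr_eq0 => /orP[]/eqP->.
    by rewrite ip0l normr0 normr0 mul0r.
  by rewrite ip_sym ip0l normr0 normr0 mulr0.
have expand s : s ^+ 2 = 1 ->
    0 <= 2 * (`|u| * `|v|) * (`|u| * `|v| + s * ip u v).
  move=> s2; have := sqr_ge0 `| `|v| *: u + (s * `|u|) *: v|.
  rewrite -(ip_norm ipH) !(ipDl, ipDr, ipZl, ipZr) !ip_norm (ip_sym _ v u).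
  by rewrite (_ : s * `|u| * (s * `|u| * `|v| ^+ 2) = s ^+ 2 * (`|u| * `|v|) ^+ 2);
    [rewrite s2; nra | ring].
have := expand 1 (expr1n _ _).
have := expand (-1); rewrite sqrrN expr1n => /(_ erefl).
have : 0 < `|u| * `|v| by rewrite lt_neqAle eq_sym uv_gt0 mulr_ge0.
rewrite ler_norml; nra.
Qed.

End InnerProduct.

Section ConditionalMean.
Variables (R : realType) (d : measure_display) (T : measurableType d)
  (P : probability T R) (H : normedModType R) (ipH : inner_product H).

Lemma probability_fine_gt0 (E : set T) :
  measurable E -> (0 < P E)%E -> 0 < fine (P E).
Proof.
move=> mE PE_gt0; apply: fine_gt0; rewrite PE_gt0 /=.
exact: le_lt_trans (probability_le1 P mE) (ltry 1).
Qed.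

Lemma integrable_ip (h : H) (F : T -> H) (E : set T) : measurable E ->
  measurable_fun E (fun w => ip ipH h (F w)) ->
  P.-integrable E (fun w => (`|F w|)%:E) ->
  P.-integrable E (fun w => (ip ipH h (F w))%:E).
Proof.
move=> mE mhF intF.
apply: (le_integrable mE _ _ (integrableZl mE `|h| intF)).
  exact/measurable_EFinP.
move=> w _; rewrite -EFinM !abse_EFin lee_fin normrM !normr_id.
exact: normr_ip_le.
Qed.

Lemma bochner_cond_meanU (E1 E0 : set T) (F : T -> H) m m1 m0 :
  [disjoint E1 & E0] ->
  bochner_cond_mean P ipH (E1 `|` E0) F m ->
  bochner_cond_mean P ipH E1 F m1 ->
  bochner_cond_mean P ipH E0 F m0 ->
  m = (fine (P E1) / fine (P (E1 `|` E0))) *: m1 +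
      (fine (P E0) / fine (P (E1 `|` E0))) *: m0.
Proof.
move=> E10 [mE PE_gt0 _ intE ipm] [mE1 PE1_gt0 _ _ ipm1] [mE0 PE0_gt0 _ _ ipm0].
apply: (@eq_ip _ _ ipH) => h; rewrite ipDr !ipZr.
have [mhF ->] := ipm h; have [_ ->] := ipm1 h; have [_ ->] := ipm0 h.
have -> : fine (\int[P]_(w in E1 `|` E0) (ip ipH h (F w))%:E) =
    fine (\int[P]_(w in E1) (ip ipH h (F w))%:E) +
    fine (\int[P]_(w in E0) (ip ipH h (F w))%:E).
  exact: Rintegral_setU mE1 mE0 (integrable_ip mE mhF intE) E10.
have := probability_fine_gt0 mE PE_gt0.
have := probability_fine_gt0 mE1 PE1_gt0; have := probability_fine_gt0 mE0 PE0_gt0.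
by move=> *; field; rewrite !lt0r_neq0.
Qed.

Lemma bochner_cond_mean_mixture (Y G : T -> bool) (F : T -> H) g m m1 m0 :
  bochner_cond_mean P ipH [set w | G w = g] F m ->
  bochner_cond_mean P ipH [set w | Y w = true /\ G w = g] F m1 ->
  bochner_cond_mean P ipH [set w | Y w = false /\ G w = g] F m0 ->
  m = pY1 P Y G g *: m1 + (1 - pY1 P Y G g) *: m0.
Proof.
set E1 := [set w | Y w = true /\ G w = g].
set E0 := [set w | Y w = false /\ G w = g].
have EU : [set w | G w = g] = E1 `|` E0.
  apply/seteqP; split=> w /=; last by case=> -[].
  by move=> Gw; case Yw: (Y w); [left | right].
have E10 : [disjoint E1 & E0].
  by apply/disj_setPS => w [[Y1 _] [Y0 _]]; rewrite Y1 in Y0.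
rewrite EU => cmE cmE1 cmE0; rewrite (bochner_cond_meanU E10 cmE cmE1 cmE0).
have [mE PE_gt0 _ _ _] := cmE.
have [mE1 _ _ _ _] := cmE1; have [mE0 _ _ _ _] := cmE0.
have PE0 : fine (P E0) = fine (P (E1 `|` E0)) - fine (P E1).
  rewrite measureU //; last exact/eqP.
  by rewrite fineD ?fin_num_measure // addrC addKr.
have pY1E : pY1 P Y G g = fine (P E1) / fine (P (E1 `|` E0)) by rewrite -EU.
rewrite pY1E PE0; congr (_ *: _ + _ *: _); field.
by rewrite gt_eqF // probability_fine_gt0.
Qed.

End ConditionalMean.

Lemma mixture_diff (R : pzRingType) (V : lmodType R) (pa pb : R)
    (a1 a0 b1 b0 : V) :
  (pa *: a1 + (1 - pa) *: a0) - (pb *: b1 + (1 - pb) *: b0) =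
  (pa - pb) *: (a1 - a0) + pb *: (a1 - b1) + (1 - pb) *: (a0 - b0).
Proof.
rewrite -[pa in LHS](subrK pb); move: (pa - pb) => c.
rewrite (_ : 1 - (c + pb) = (1 - pb) - c); last by rewrite opprD addrA addrAC.
rewrite [(c + pb) *: _]scalerDl [(1 - pb - c) *: _]scalerBl !scalerBr.
move: (c *: a1) (pb *: a1) ((1 - pb) *: a0) (c *: a0) (pb *: b1) ((1 - pb) *: b0).
move=> x1 x2 x3 x4 x5 x6.
by rewrite opprD (addrC x3) (addrACA x1) -[LHS]addrA (addrACA x2) [LHS]addrA.
Qed.

Lemma mixture_component_gap_le (R : realFieldType) (V : normedModType R)
    (pa pb eps rho : R) (a1 a0 b1 b0 : V) :
  0 <= pb <= 1 -> pa != pb ->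
  `|(pa *: a1 + (1 - pa) *: a0) - (pb *: b1 + (1 - pb) *: b0)| <= eps ->
  `|a1 - b1| <= rho -> `|a0 - b0| <= rho ->
  `|a1 - a0| <= (eps + rho) / `|pa - pb|.
Proof.
move=> /andP[pb0 pb1] pab mix_le a1_le a0_le.
rewrite ler_pdivlMr ?normr_gt0 ?subr_eq0 // mulrC -normrZ.
move: mix_le; rewrite mixture_diff -addrA => mix_le.
rewrite -(addrK (pb *: (a1 - b1) + (1 - pb) *: (a0 - b0)) ((pa - pb) *: _)).
apply: le_trans (ler_normB _ _) _; apply: le_trans (lerD mix_le (ler_normD _ _)) _.
rewrite !normrZ (ger0_norm pb0) ger0_norm ?subr_ge0 //.
have : pb * `|a1 - b1| <= pb * rho by rewrite ler_wpM2l.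
have : (1 - pb) * `|a0 - b0| <= (1 - pb) * rho by rewrite ler_wpM2l ?subr_ge0.
lra.
Qed.

(* Groups: a := true, b := false.  Labels: Y = 1 is true, Y = 0 is false. *)
Theorem theorem6 (R : realType)
  (d : measure_display) (Omega : measurableType d) (P : probability Omega R)
  (dX : measure_display) (Xs : measurableType dX)
  (dZ : measure_display) (Zs : measurableType dZ)
  (X : Omega -> Xs) (Y G : Omega -> bool)
  (H : completeNormedModType R) (ipH : inner_product H)
  (Phi : Xs -> Zs) (phiZ : Zs -> H)
  (muG : bool -> H) (muYG : bool -> bool -> H) (eps rho : R) :
  measurable_fun setT X ->
  (forall y : bool, measurable (Y @^-1` [set y])) ->
  (forall g : bool, measurable (G @^-1` [set g])) ->
  (forall g : bool, (0 < P [set w | G w = g])%E) ->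
  (forall g : bool, 0 < pY1 P Y G g < 1) ->
  pY1 P Y G true != pY1 P Y G false ->
  measurable_fun setT Phi ->
  (forall h : H, measurable_fun setT (fun z => ip ipH h (phiZ z))) ->
  measurable_fun setT (fun z => `|phiZ z|) ->
  (forall g : bool, bochner_cond_mean P ipH [set w | G w = g]
                      (fun w => phiZ (Phi (X w))) (muG g)) ->
  (forall y g : bool, bochner_cond_mean P ipH [set w | Y w = y /\ G w = g]
                      (fun w => phiZ (Phi (X w))) (muYG y g)) ->
  0 <= eps -> 0 <= rho ->
  `|muG true - muG false| <= eps ->
  (forall y : bool, `|muYG y true - muYG y false| <= rho) ->
  `|muYG true true - muYG false true|
     <= (eps + rho) / `|pY1 P Y G true - pY1 P Y G false| /\
  `|muYG true false - muYG false false|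
     <= (eps + rho) / `|pY1 P Y G true - pY1 P Y G false|.
Proof.
move=> _ _ _ _ p01 pab _ _ _ cmG cmYG _ _ mu_le muY_le.
have mix g := bochner_cond_mean_mixture (cmG g) (cmYG true g) (cmYG false g).
rewrite (mix true) (mix false) in mu_le.
have p01W g : 0 <= pY1 P Y G g <= 1 by have /andP[p0 p1] := p01 g; rewrite !ltW.
split.
  exact: mixture_component_gap_le (p01W false) pab mu_le
    (muY_le true) (muY_le false).
have muY_le' y : `|muYG y false - muYG y true| <= rho by rewrite distrC.
rewrite (distrC (pY1 P Y G true)).
apply: mixture_component_gap_le (p01W true) _ _ (muY_le' true) (muY_le' false).
  by rewrite eq_sym.
by rewrite distrC.
Qed.
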